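(* Let $A \subset \mathbb{Z}^d$ be a finite set such that $A - A$ generates $\mathbb{Z}^d$ additively and such that its convex hull $\Delta_A$ is a $d$-dimensional simplex. Denote by $v_1, \ldots, v_{d+1}$ the vertices of $\Delta_A$, and for each $i$ let \[ T_i(A) = \bigcup_{k \geq 0} k(A - v_i), \] where $A - v_i = \{a - v_i : a \in A\}$. Then for all integers $h \geq 0$ with $h \geq \mathrm{vol}(\Delta_A)\cdot (d+1)! - 2 - 2d$ we have \[ hA = \bigcap_{i=1}^{d+1} \big( h v_i + T_i(A) \big). \]
   Context: For a finite set $B \subset \mathbb{Z}^d$ and integer $k \geq 0$, $kB = \{b_1 + \cdots + b_k : b_i \in B\}$, with $0B = \{0\}$. $\mathrm{vol}(\Delta_A)$ is the $d$-dimensional Lebesgue volume of the convex hull of $A$. For a set $S$ and vector $x$, $x + S = \{x + s : s \in S\}$. *)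

From HB Require Import structures.
From mathcomp Require Import all_boot all_order all_algebra.
From mathcomp Require Import finmap.
Set Implicit Arguments. Unset Strict Implicit. Unset Printing Implicit Defensive.
Import Order.TTheory GRing.Theory Num.Theory.
Local Open Scope ring_scope.
Local Open Scope fset_scope.

(* Points of Z^d are row vectors 'rV[int]_d; subsets of Z^d are predicates. *)
Definition zpt (d : nat) := 'rV[int]_d.

Definition toQ (d : nat) (x : 'rV[int]_d) : 'rV[rat]_d :=
  map_mx (fun z : int => z%:~R) x.

Definition ksum (d k : nat) (B : 'rV[int]_d -> Prop) : 'rV[int]_d -> Prop :=
  fun z => exists f : 'I_k -> 'rV[int]_d,
    (forall j, B (f j)) /\ z = \sum_(j < k) f j.

Definition translate (d : nat) (x : 'rV[int]_d) (S : 'rV[int]_d -> Prop)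
  : 'rV[int]_d -> Prop := fun z => S (z - x).

Definition minus_pt (d : nat) (A : {fset 'rV[int]_d}) (v : 'rV[int]_d)
  : 'rV[int]_d -> Prop := translate (- v) (fun a => a \in A).

Definition Tcone (d : nat) (A : {fset 'rV[int]_d}) (v : 'rV[int]_d)
  : 'rV[int]_d -> Prop := fun z => exists k : nat, ksum k (minus_pt A v) z.

Definition diff_generates (d : nat) (A : {fset 'rV[int]_d}) : Prop :=
  forall z : 'rV[int]_d, exists c : 'rV[int]_d -> 'rV[int]_d -> int,
    z = \sum_(a <- A) \sum_(b <- A) c a b *: (a - b).

Definition edge_mx (d : nat) (v : 'I_d.+1 -> 'rV[int]_d) : 'M[rat]_d :=
  \matrix_(i < d, j < d) ((v (lift ord0 i) 0 j - v ord0 0 j)%:~R : rat).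

Definition aff_indep (d : nat) (v : 'I_d.+1 -> 'rV[int]_d) : Prop :=
  \det (edge_mx v) != 0.

Definition in_conv (d : nat) (v : 'I_d.+1 -> 'rV[int]_d) (x : 'rV[int]_d) : Prop :=
  exists lam : 'I_d.+1 -> rat,
    (forall i, 0 <= lam i) /\ \sum_i lam i = 1 /\
    toQ x = \sum_i lam i *: toQ (v i).

Definition conv_is_simplex (d : nat) (A : {fset 'rV[int]_d})
  (v : 'I_d.+1 -> 'rV[int]_d) : Prop :=
  aff_indep v /\ (forall i, v i \in A) /\ (forall a, a \in A -> in_conv v a).

Definition simplex_vol (d : nat) (v : 'I_d.+1 -> 'rV[int]_d) : rat :=
  `|\det (edge_mx v)| / (d`!)%:R.

From HB Require Import structures.
From mathcomp Require Import all_boot all_order all_algebra.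
From mathcomp Require Import finmap.
From mathcomp Require Import zify ring lra.
Set Implicit Arguments. Unset Strict Implicit. Unset Printing Implicit Defensive.
Import Order.TTheory GRing.Theory Num.Theory.
Local Open Scope ring_scope.

(* Measure points by their barycentric coordinates with respect to v_0, ..., v_d,
   and let N = |det(v_j - v_0)| be the index in Z^d of the lattice spanned by the
   edges, so that N times any coordinate of a lattice point is an integer.  If z
   lies in every cone h v_i + T_i, pick a vertex v_i whose coordinate mu_i in the
   dilate h Delta is at least h / (d + 1), and write z - h v_i as a sum of
   vectors a - v_i with a in A.  By pigeonhole on Z^d modulo the edge lattice,
   N summands with a off the facet opposite v_i always contain a nonempty block
   whose sum lies in the edge lattice; such a block is replaced by fewer copies
   of vertices.  Once fewer than N such summands remain, every summand other
   than v_i lowers the i-th coordinate by 1 (on the facet) or by at least 1/N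
   (off it), which bounds their number by h - mu_i + (N - 1)(1 - 1/N) <= h;
   padding with copies of v_i then exhibits z in hA. *)

Lemma sum0_head (R : zmodType) n (f : 'I_n.+1 -> R) :
  \sum_j f j = 0 -> f ord0 = - \sum_l f (lift ord0 l).
Proof. by move=> hf; apply/eqP; rewrite -addr_eq0 -big_ord_recl hf. Qed.

Lemma sumr_deltaZ (R : pzRingType) (V : lmodType R) (T : finType) (l : T)
    (F : T -> V) :
  \sum_j (j == l)%:R *: F j = F l.
Proof.
by rewrite (bigD1 l) //= eqxx scale1r big1 ?addr0 // => j /negbTE ->; rewrite scale0r.
Qed.

Lemma sumr_delta (R : pzRingType) (T : finType) (l : T) :
  \sum_(j : T) (j == l)%:R = 1 :> R.
Proof. by rewrite (bigD1 l) //= eqxx big1 ?addr0 // => j /negbTE ->. Qed.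

Lemma exists_ge_mean (R : realDomainType) n (c : 'I_n.+1 -> R) :
  exists i, \sum_j c j <= n.+1%:R * c i.
Proof.
have [/existsP [i hi]|/existsPn hlt] := boolP [exists i, \sum_j c j <= n.+1%:R * c i].
  by exists i.
have : \sum_(j < n.+1) n.+1%:R * c j < \sum_(j < n.+1) \sum_k c k.
  apply: ltr_sum => [|j _]; last by rewrite ltNge hlt.
  by apply/hasP; exists ord0; rewrite ?mem_index_enum.
by rewrite -mulr_sumr sumr_const card_ord mulr_natl ltxx.
Qed.

Lemma sumr_gt_Nsize (R : realDomainType) (T : eqType) (f : T -> R) (J : seq T) :
  J != [::] -> all (fun a => -1 < f a) J -> - (size J)%:R < \sum_(a <- J) f a.
Proof.
move=> hJ /allP hf.
have -> : - (size J)%:R = \sum_(a <- J) (-1 : R).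
  by rewrite big_const_seq count_predT iter_addr_0 mulNrn.
rewrite big_seq [X in _ < X]big_seq; apply: ltr_sum => //.
by case: J hJ {hf} => // a J _ /=; rewrite inE eqxx.
Qed.

Lemma intr_lt0_leN1 (x : rat) : x \is a Num.int -> x < 0 -> x <= -1.
Proof.
move=> /intrP [m ->]; rewrite ltrz0 => hm.
suff : m%:~R <= (-1 : int)%:~R :> rat by rewrite rmorphN1.
by rewrite ler_int; lia.
Qed.

Lemma pigeonhole_nat (T : finType) (f : nat -> T) n : (#|T| <= n)%N ->
  exists m1 m2, (m1 < m2 <= n)%N /\ f m1 = f m2.
Proof.
move=> hT; pose g (m : 'I_n.+1) := f m.
have /injectivePn [m1 [m2 hne heq]] : ~~ injectiveb g.
  by apply: contraL hT => /injectiveP /leq_card; rewrite card_ord -ltnNge.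
case: (ltngtP m1 m2) => [lt12|lt21|/val_inj eq12]; last by rewrite eq12 eqxx in hne.
- by exists m1, m2; rewrite lt12 -ltnS ltn_ord.
- by exists m2, m1; rewrite lt21 -ltnS ltn_ord.
Qed.

Lemma abszmodz_lt (m n : int) : n != 0 -> (`|(m %% n)%Z| < `|n|)%N.
Proof. by move=> hn; rewrite -ltz_nat gez0_abs ?modz_ge0 ?ltz_mod. Qed.

Section SmithResidue.
Variables (d : nat) (L R : 'M[int]_d) (ds : seq int).
Hypotheses (L_unit : L \in unitmx) (R_unit : R \in unitmx).
Hypothesis ds_neq0 : forall k : 'I_d, ds`_k != 0.

Let D : 'M[int]_d := \matrix_(i, j) (ds`_i *+ (i == j :> nat)).

(* Through the Smith form [L *m D *m R], Z^d modulo the row lattice of that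
   matrix is the product of the Z / ds_k. *)
Definition residue (x : 'rV[int]_d) : {dffun forall k : 'I_d, 'I_`|(ds`_k)%R|} :=
  [ffun k => Ordinal (abszmodz_lt ((x *m invmx R) 0 k) (ds_neq0 k))].

Lemma card_residue :
  #|{dffun forall k : 'I_d, 'I_`|(ds`_k)%R|}| = (\prod_(k < d) `|(ds`_k)%R|)%N.
Proof.
rewrite card_dep_ffun foldrE big_map big_enum.
by under eq_bigr do rewrite card_ord.
Qed.

Lemma residue_eq x y : residue x = residue y -> exists u, x - y = u *m (L *m D *m R).
Proof.
move=> /ffunP hxy.
set x' := x *m invmx R; set y' := y *m invmx R.
have ds_dvd k : (ds`_k %| x' 0%R k - y' 0%R k)%Z.
  rewrite -eqz_mod_dvd; move: (hxy k); rewrite !ffunE.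
  move=> /(congr1 (fun r => Posz (val r))) /=.
  by rewrite !gez0_abs ?modz_ge0 ?ds_neq0 // => /eqP.
pose q := \row_k divz (x' 0 k - y' 0 k) ds`_k.
have diff_coords : (x - y) *m invmx R = q *m D.
  apply/rowP => k; rewrite mulmxBl -/x' -/y' [LHS]mxE [X in _ + X]mxE.
  rewrite [RHS]mxE (bigD1 k) //= big1 ?addr0.
    by rewrite [q 0 k]mxE [D k k]mxE eqxx mulr1n divzK.
  by move=> j /negbTE hj; rewrite [D j k]mxE (_ : (j == k :> nat) = false) ?mulr0n ?mulr0.
exists (q *m invmx L).
by rewrite -[x - y](mulmxKV R_unit) diff_coords !mulmxA mulmxKV.
Qed.

End SmithResidue.

Lemma lattice_pigeonhole d (M : 'M[int]_d) (p : nat -> 'rV[int]_d) : \det M != 0 ->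
  exists m1 m2, (m1 < m2 <= `|\det M|)%N /\ exists u, p m2 - p m1 = u *m M.
Proof.
move=> detM; case: (int_Smith_normal_form M) => L L_unit [R R_unit [ds _ hM]].
have det_unit (U : 'M[int]_d) : U \in unitmx -> `|\det U|%N = 1%N.
  by rewrite unitmxE => /orP [] /eqP ->.
have hdet : `|\det M|%N = (\prod_(k < d) `|(ds`_k)%R|)%N.
  rewrite hM !det_mulmx !abszM (det_unit L) // (det_unit R) // mul1n muln1.
  rewrite (_ : \matrix_(i, j) _ = diag_mx (\row_k ds`_k)); last first.
    by apply/matrixP => i j; rewrite !mxE.
  by rewrite det_diag (big_morph _ abszM (erefl _)); apply: eq_bigr => k _; rewrite mxE.
have ds_neq0 (k : 'I_d) : ds`_k != 0.
  by apply: contraNneq detM => hk; rewrite -absz_eq0 hdet (bigD1 k) //= hk.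
have hcard : (#|{dffun forall k : 'I_d, 'I_`|(ds`_k)%R|}| <= `|\det M|)%N.
  by rewrite card_residue hdet.
have [m1 [m2 [lt12 heq]]] := pigeonhole_nat (residue R ds_neq0 \o p) hcard.
exists m1, m2; split => //.
by rewrite hM; apply: residue_eq => //; rewrite heq.
Qed.

HB.instance Definition _ (d : nat) :=
  GRing.Additive.copy (@toQ d) (map_mx (fun z : int => z%:~R)).

Lemma toQ_inj d : injective (@toQ d).
Proof.
move=> x y /matrixP hxy; apply/matrixP => i j.
by have := hxy i j; rewrite !mxE => /intr_inj.
Qed.

Section Barycentric.
Variables (d : nat) (v : 'I_d.+1 -> 'rV[int]_d).
Hypothesis hind : aff_indep v.

Definition edge_mxZ : 'M[int]_d :=
  \matrix_(i, j) (v (lift ord0 i) 0 j - v ord0 0 j).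

Lemma edge_mxE : edge_mx v = map_mx (fun z : int => z%:~R) edge_mxZ.
Proof. by apply/matrixP => i j; rewrite !mxE. Qed.

Lemma edge_mx_unit : edge_mx v \in unitmx.
Proof. by rewrite unitmxE unitfE. Qed.

(* Coordinates of [y] in the edge basis [v_j - v_0], completed by a 0-th one so
   that they sum to 0: the barycentric coordinates of the displacement [y]. *)
Definition bary (y : 'rV[int]_d) (j : 'I_d.+1) : rat :=
  let c := toQ y *m invmx (edge_mx v) in
  if unlift ord0 j is Some l then c 0 l else - \sum_l c 0 l.

Lemma sum0_combination (c : 'I_d.+1 -> rat) : \sum_j c j = 0 ->
  \sum_j c j *: toQ (v j) = \row_l c (lift ord0 l) *m edge_mx v.
Proof.
move=> hc; rewrite mulmx_sum_row big_ord_recl (sum0_head hc).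
rewrite scaleNr scaler_suml -sumrN -big_split /=; apply: eq_bigr => l _.
have -> : row l (edge_mx v) = toQ (v (lift ord0 l)) - toQ (v ord0).
  by apply/rowP => j; rewrite !mxE intrB.
by rewrite mxE scalerBr addrC.
Qed.

Lemma bary_sum0 y : \sum_j bary y j = 0.
Proof.
rewrite big_ord_recl /bary unlift_none addrC.
by under eq_bigr do rewrite liftK; rewrite subrr.
Qed.

Lemma toQ_bary y : toQ y = \sum_j bary y j *: toQ (v j).
Proof.
rewrite sum0_combination ?bary_sum0 //.
have -> : \row_l bary y (lift ord0 l) = toQ y *m invmx (edge_mx v).
  by apply/rowP => l; rewrite mxE /bary liftK.
by rewrite mulmxKV ?edge_mx_unit.
Qed.

Lemma toQ_bary_edges y i :
  toQ y = \sum_j bary y j *: (toQ (v j) - toQ (v i)).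
Proof.
under eq_bigr do rewrite scalerBr.
by rewrite sumrB -scaler_suml bary_sum0 scale0r subr0 -toQ_bary.
Qed.

Lemma bary_unique y (c : 'I_d.+1 -> rat) : \sum_j c j = 0 ->
  toQ y = \sum_j c j *: toQ (v j) -> c =1 bary y.
Proof.
move=> hc hy.
have c_lift l : c (lift ord0 l) = bary y (lift ord0 l).
  by rewrite /bary liftK hy sum0_combination // mulmxK ?edge_mx_unit // mxE.
move=> j; case: (unliftP ord0 j) => [l ->|->]; first exact: c_lift.
by rewrite (sum0_head hc) (sum0_head (bary_sum0 y)); congr (- _); apply: eq_bigr.
Qed.

Lemma baryD x y j : bary (x + y) j = bary x j + bary y j.
Proof.
apply/esym/(bary_unique (c := fun j => bary x j + bary y j)).
  by rewrite big_split /= !bary_sum0 addr0.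
by rewrite raddfD /= !toQ_bary -big_split; apply: eq_bigr => i _; rewrite scalerDl.
Qed.

Lemma bary0 j : bary 0 j = 0.
Proof.
apply/esym/(bary_unique (c := fun _ => 0)); first by rewrite big1.
by rewrite raddf0 big1 // => i _; rewrite scale0r.
Qed.

Lemma baryMn x n j : bary (x *+ n) j = n%:R * bary x j.
Proof.
elim: n => [|n IH]; first by rewrite mulr0n bary0 mul0r.
by rewrite mulrS baryD IH mulrS mulrDl mul1r.
Qed.

Lemma bary_sum (I : Type) (r : seq I) (P : pred I) (F : I -> 'rV[int]_d) j :
  bary (\sum_(i <- r | P i) F i) j = \sum_(i <- r | P i) bary (F i) j.
Proof. exact: (big_morph (bary^~ j) (fun x y => baryD x y j) (bary0 j)). Qed.

Lemma bary_edge l i j : bary (v l - v i) j = (j == l)%:R - (j == i)%:R.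
Proof.
apply/esym/(bary_unique (c := fun j => (j == l)%:R - (j == i)%:R)).
  by rewrite sumrB !sumr_delta subrr.
rewrite raddfB; under eq_bigr do rewrite scalerBl.
by rewrite sumrB !sumr_deltaZ.
Qed.

Definition lattice_index : nat := `|\det edge_mxZ|%N.

Lemma lattice_indexE : lattice_index%:R = `|\det (edge_mx v)| :> rat.
Proof. by rewrite edge_mxE det_map_mx natr_absz intr_norm. Qed.

Lemma lattice_index_gt0 : (0 < lattice_index)%N.
Proof. by rewrite -(ltr_nat rat) lattice_indexE normr_gt0. Qed.

Lemma bary_lattice_int u j : bary (u *m edge_mxZ) j \is a Num.int.
Proof.
have coords : toQ (u *m edge_mxZ) *m invmx (edge_mx v) = toQ u.
  by rewrite /toQ map_mxM -edge_mxE mulmxK ?edge_mx_unit.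
rewrite /bary coords; case: (unlift ord0 j) => [l|]; first by rewrite mxE intr_int.
by rewrite rpredN rpred_sum // => l _; rewrite mxE intr_int.
Qed.

Lemma index_bary_int y j : lattice_index%:R * bary y j \is a Num.int.
Proof.
have det_coords l : \det (edge_mx v) * (toQ y *m invmx (edge_mx v)) 0 l \is a Num.int.
  have -> : invmx (edge_mx v) = (\det (edge_mx v))^-1 *: \adj (edge_mx v).
    by rewrite /invmx edge_mx_unit.
  rewrite -scalemxAr mxE mulrA mulfV ?mul1r //.
  by rewrite edge_mxE -map_mx_adj /toQ -map_mxM mxE intr_int.
rewrite lattice_indexE normrEsign -mulrA rpredM ?rpredX ?rpredN ?rpred1 //.
rewrite /bary; case: (unlift ord0 j) => [l|] //.
by rewrite mulrN rpredN mulr_sumr rpred_sum // => l _; apply: det_coords.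
Qed.

Lemma exists_heavy_vertex (z : 'rV[int]_d) h :
  exists i, h%:R <= d.+1%:R * (bary (z - v i *+ h) i + h%:R).
Proof.
pose mu j := bary (z - v ord0 *+ h) j + (j == ord0)%:R * h%:R.
(* [mu] are the barycentric coordinates of [z] in the dilate [h Delta]. *)
have [i hi] := exists_ge_mean mu; exists i.
have mu_sum : \sum_j mu j = h%:R.
  by rewrite big_split /= bary_sum0 add0r -mulr_suml sumr_delta mul1r.
suff -> : bary (z - v i *+ h) i + h%:R = mu i by rewrite -mu_sum.
have -> : z - v i *+ h = (z - v ord0 *+ h) + (v ord0 - v i) *+ h.
  by rewrite mulrnBl addrA subrK.
by rewrite baryD baryMn bary_edge eqxx /mu /=; ring.
Qed.

Lemma simplex_vol_index :
  simplex_vol v * ((d.+1)`!)%:R = lattice_index%:R * d.+1%:R.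
Proof.
rewrite /simplex_vol lattice_indexE factS natrM; field.
by rewrite pnatr_eq0 -lt0n fact_gt0.
Qed.

End Barycentric.

Definition shifted_sum d (w : 'rV[int]_d) (s : seq 'rV[int]_d) :=
  \sum_(a <- s) (a - w).

Lemma shifted_sum_cat d (w : 'rV[int]_d) s t :
  shifted_sum w (s ++ t) = shifted_sum w s + shifted_sum w t.
Proof. exact: big_cat. Qed.

Section Cones.
Variables (d : nat) (A : {fset 'rV[int]_d}) (w : 'rV[int]_d) (h : nat).

Lemma ksum_translate_cone z :
  ksum h (fun a => a \in A) z -> translate (w *+ h) (Tcone A w) z.
Proof.
case=> f [fA ->]; exists h, (fun j => f j - w); split.
  by move=> j; rewrite /minus_pt /translate opprK subrK.
by rewrite sumrB sumr_const card_ord.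
Qed.

Lemma translate_cone_shifted_sum z : translate (w *+ h) (Tcone A w) z ->
  exists s, all (mem A) s /\ z - w *+ h = shifted_sum w s.
Proof.
case=> k [f [fA hz]]; exists [seq f j + w | j <- enum 'I_k]; split.
  by apply/allP => _ /mapP [j _ ->]; move: (fA j); rewrite /minus_pt /translate opprK.
by rewrite hz /shifted_sum big_map big_enum; apply: eq_bigr => j _; rewrite addrK.
Qed.

Lemma ksum_pad z s : w \in A -> all (mem A) s -> (size s <= h)%N ->
  z - w *+ h = shifted_sum w s -> ksum h (fun a => a \in A) z.
Proof.
move=> wA sA s_size hz; set s' := s ++ nseq (h - size s) w.
have s'_size : size s' = h by rewrite size_cat size_nseq subnKC.
exists (fun j : 'I_h => nth 0 s' j); split.
  move=> j; have : nth 0 s' j \in s' by rewrite mem_nth // s'_size.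
  by rewrite mem_cat => /orP [/(allP sA)|]; rewrite // mem_nseq => /andP [_ /eqP ->].
rewrite -(big_mkord xpredT (fun j => nth 0 s' j)) -s'_size -(big_nth 0 xpredT id).
have -> : \sum_(a <- s') a = shifted_sum w s' + w *+ size s'.
  by rewrite /shifted_sum sumrB big_const_seq count_predT iter_addr_0 subrK.
rewrite shifted_sum_cat -hz s'_size /shifted_sum big_nseq iter_addr_0.
by rewrite subrr mul0rn addr0 subrK.
Qed.

End Cones.

Section Reduction.
Variables (d : nat) (v : 'I_d.+1 -> 'rV[int]_d) (A : {fset 'rV[int]_d}).
Hypothesis hind : aff_indep v.
Hypothesis hA : forall a, a \in A -> in_conv v a.
Hypothesis hvA : forall j, v j \in A.
Variable i : 'I_d.+1.

Lemma bary_mem a : a \in A -> exists lam : 'I_d.+1 -> rat,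
  [/\ forall j, 0 <= lam j, \sum_j lam j = 1, toQ a = \sum_j lam j *: toQ (v j)
    & forall j, bary v (a - v i) j = lam j - (j == i)%:R].
Proof.
move=> /hA [lam [lam_ge0 [lam_sum ha]]]; exists lam; split => // j.
apply/esym/(bary_unique hind (c := fun j => lam j - (j == i)%:R)).
  by rewrite sumrB lam_sum sumr_delta subrr.
rewrite raddfB /= ha -(sumr_deltaZ i (fun j => toQ (v j))) -sumrB.
by apply: eq_bigr => k _; rewrite scalerBl.
Qed.

Lemma bary_mem_ge0 a j : a \in A -> j != i -> 0 <= bary v (a - v i) j.
Proof. by move=> /bary_mem [lam [lam_ge0 _ _ ->]] /negbTE ->; rewrite subr0. Qed.

Lemma bary_mem_geN1 a : a \in A -> -1 <= bary v (a - v i) i.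
Proof. by move=> /bary_mem [lam [lam_ge0 _ _ ->]]; rewrite eqxx lerBrDr addrC subrr. Qed.

Lemma bary_mem_lt0 a : a \in A -> a != v i -> bary v (a - v i) i < 0.
Proof.
move=> /bary_mem [lam [lam_ge0 lam_sum ha ->]] hne; rewrite eqxx subr_lt0.
have lam_sumD1 : lam i + \sum_(j | j != i) lam j = 1 by rewrite -lam_sum [RHS](bigD1 i).
have lam_le1 : lam i <= 1 by rewrite -lam_sumD1 lerDl sumr_ge0.
rewrite lt_neqAle lam_le1 andbT; apply: contra hne => /eqP hi.
have lam0 : forall j, j != i -> lam j = 0.
  by apply: psumr_eq0P => //; apply: (addrI (lam i)); rewrite lam_sumD1 addr0 hi.
apply/eqP/toQ_inj; rewrite ha (bigD1 i) //= big1 => [|j /lam0 ->].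
  by rewrite hi scale1r addr0.
by rewrite scale0r.
Qed.

Lemma index_bary_mem_leN1 a : a \in A -> a != v i ->
  (lattice_index v)%:R * bary v (a - v i) i <= -1.
Proof.
move=> ha hne; apply: intr_lt0_leN1; first exact: index_bary_int.
by rewrite pmulr_rlt0 ?ltr0n ?lattice_index_gt0 ?bary_mem_lt0.
Qed.

(* For [a] in [A], [bary v (a - v i) i] is the i-th barycentric coordinate of [a]
   minus 1, so [off_facet a] says that [a] is not on the facet opposite [v i]. *)
Definition off_facet (a : 'rV[int]_d) := -1 < bary v (a - v i) i.

Lemma vertex_decomposition y :
  (forall j, bary v y j \is a Num.int) -> (forall j, j != i -> 0 <= bary v y j) ->
  exists R, [/\ all (mem A) R, shifted_sum (v i) R = y & (size R)%:R = - bary v y i].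
Proof.
move=> y_int y_ge0.
have y_nat j : j != i -> bary v y j \is a Num.nat.
  by move=> hj; rewrite natrEint y_int y_ge0.
pose n j : nat := if j == i then 0%N else Num.truncn (bary v y j).
have hn j : (n j)%:R = if j == i then 0 else bary v y j.
  by rewrite /n; case: eqP => [//|/eqP hj]; rewrite truncnK ?y_nat.
exists (flatten [seq nseq (n j) (v j) | j <- enum 'I_d.+1]); split.
- apply/allP => x /flatten_mapP [j _]; rewrite mem_nseq => /andP [_ /eqP ->].
  exact: hvA.
- rewrite /shifted_sum big_flatten /= big_map big_enum /=.
  under eq_bigr do rewrite big_nseq iter_addr_0.
  apply: toQ_inj; rewrite raddf_sum /= [RHS](toQ_bary_edges hind _ i).
  apply: eq_bigr => j _; rewrite raddfMn raddfB /= -scaler_nat hn.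
  by case: eqP => [->|//]; rewrite !subrr !scaler0.
- rewrite size_flatten sumnE /shape -map_comp big_map big_enum /= natr_sum.
  under eq_bigr do rewrite size_nseq hn.
  have := bary_sum0 v y; rewrite (bigD1 i) //= => hsum.
  have -> : - bary v y i = \sum_(j | j != i) bary v y j.
    by apply/eqP; rewrite eq_sym -addr_eq0 addrC hsum.
  by rewrite (bigD1 i) //= eqxx add0r; apply: eq_bigr => j /negbTE ->.
Qed.

Lemma replace_block J : all (mem A) J -> J != [::] -> all off_facet J ->
  (exists u, shifted_sum (v i) J = u *m edge_mxZ v) ->
  exists R, [/\ all (mem A) R, shifted_sum (v i) R = shifted_sum (v i) J
    & (size R < size J)%N].
Proof.
move=> /allP JA J0 J_off [u hu].
have y_ge0 j : j != i -> 0 <= bary v (shifted_sum (v i) J) j.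
  move=> hj; rewrite /shifted_sum (bary_sum hind) big_seq sumr_ge0 // => a /JA ha.
  exact: bary_mem_ge0.
have y_int j : bary v (shifted_sum (v i) J) j \is a Num.int.
  by rewrite hu bary_lattice_int.
have [R [RA RJ Rsize]] := vertex_decomposition y_int y_ge0.
exists R; split => //.
by rewrite -(ltr_nat rat) Rsize ltrNl /shifted_sum (bary_sum hind) sumr_gt_Nsize.
Qed.

Lemma off_facet_block s : (lattice_index v <= count off_facet s)%N ->
  exists J rest, [/\ perm_eq s (J ++ rest), J != [::], all off_facet J
    & exists u, shifted_sum (v i) J = u *m edge_mxZ v].
Proof.
move=> hcount; set t := filter off_facet s.
have det_neq0 : \det (edge_mxZ v) != 0 by rewrite -absz_gt0 lattice_index_gt0.
have [m1 [m2 [/andP [lt12 le2] [u hu]]]] :=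
  lattice_pigeonhole (fun m => shifted_sum (v i) (take m t)) det_neq0.
have m2t : (m2 <= size t)%N by rewrite size_filter (leq_trans le2).
have ht : t = take m1 t ++ drop m1 (take m2 t) ++ drop m2 t.
  by rewrite catA -{1}(take_takel t (ltnW lt12)) !cat_take_drop.
exists (drop m1 (take m2 t)), (take m1 t ++ drop m2 t ++ filter (predC off_facet) s).
split.
- by rewrite -(perm_filterC off_facet s) -/t {1}ht -!catA perm_catCA.
- by rewrite -size_eq0 size_drop size_takel // subn_eq0 -ltnNge.
- by apply/allP => a /mem_drop /mem_take; rewrite mem_filter => /andP [].
- exists u; rewrite -hu {2}(_ : take m2 t = take m1 t ++ drop m1 (take m2 t)).
    by rewrite /shifted_sum big_cat /= addrC addrK.
  by rewrite -{1}(take_takel t (ltnW lt12)) cat_take_drop.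
Qed.

Lemma reduce_off_facet s : all (mem A) s -> exists s',
  [/\ all (mem A) s', shifted_sum (v i) s' = shifted_sum (v i) s
     & (count off_facet s' < lattice_index v)%N].
Proof.
have [n] := ubnP (size s); elim: n s => // n IH s s_size sA.
case: (ltnP (count off_facet s) (lattice_index v)) => hcount; first by exists s.
have [J [rest [sJ J0 J_off J_lattice]]] := off_facet_block hcount.
move: sA; rewrite (perm_all _ sJ) all_cat => /andP [JA restA].
have [R [RA RJ RJ_size]] := replace_block JA J0 J_off J_lattice.
have size_lt : (size (R ++ rest) < n)%N.
  by rewrite -ltnS (leq_trans _ s_size) // (perm_size sJ) !size_cat ltnS ltn_add2r.
have RrestA : all (mem A) (R ++ rest) by rewrite all_cat RA.
have [s' [s'A s'_sum s'_count]] := IH _ size_lt RrestA.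
exists s'; split => //.
rewrite s'_sum /shifted_sum (perm_big _ sJ) -!/(shifted_sum (v i) _).
by rewrite !shifted_sum_cat RJ.
Qed.

Lemma short_representation s : all (mem A) s -> exists s',
  [/\ all (mem A) s', v i \notin s', shifted_sum (v i) s' = shifted_sum (v i) s
     & (count off_facet s' < lattice_index v)%N].
Proof.
move=> /reduce_off_facet [s' [s'A s'_sum s'_count]].
exists (filter (predC1 (v i)) s'); split.
- by apply/allP => a; rewrite mem_filter => /andP [_ /(allP s'A)].
- by rewrite mem_filter /= eqxx.
- rewrite -s'_sum /shifted_sum big_filter [RHS](bigID (predC1 (v i))) /=.
  by rewrite [X in _ = _ + X]big1 ?addr0 // => a /negPn /eqP ->; rewrite subrr.
- by rewrite count_filter (leq_ltn_trans _ s'_count) // sub_count // => a /andP [].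
Qed.

Let N := (lattice_index v)%:R : rat.

Lemma facet_weight_ge1 a : a \in A -> a != v i ->
  1 <= - bary v (a - v i) i + (off_facet a)%:R * (1 - N^-1).
Proof.
move=> aA a_vi; have N_gt0 : 0 < N by rewrite ltr0n lattice_index_gt0.
have := index_bary_mem_leN1 aA a_vi; rewrite -/N => hN.
have := bary_mem_geN1 aA; rewrite /off_facet.
case: ltrP => /= [_ _|b_le _]; last by rewrite mul0r addr0 lerNr.
have : bary v (a - v i) i <= - N^-1 by rewrite -(ler_pM2l N_gt0) mulrN mulfV ?gt_eqF.
lra.
Qed.

Lemma size_le_bary s : all (mem A) s -> v i \notin s ->
  (size s)%:R <=
    - bary v (shifted_sum (v i) s) i + (count off_facet s)%:R * (1 - N^-1).
Proof.
elim: s => [|a s IH] /=.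
  by rewrite /shifted_sum big_nil (bary0 hind) oppr0 mul0r addr0.
move=> /andP [aA sA]; rewrite inE negb_or eq_sym => /andP [a_vi s_vi].
rewrite /shifted_sum big_cons -/(shifted_sum (v i) s) baryD // -add1n natrD natrD.
have := facet_weight_ge1 aA a_vi; have := IH sA s_vi; lra.
Qed.

End Reduction.

Lemma le_of_weight_bound (N c k h d : nat) (mu : rat) : (c < N)%N ->
  h%:R <= d.+1%:R * mu -> N%:R * d.+1%:R - 2 - 2 * d%:R <= h%:R :> rat ->
  k%:R <= h%:R - mu + c%:R * (1 - N%:R^-1) -> (k <= h)%N.
Proof.
move=> cN h_mu h_N k_le; rewrite -ltnS -(ltr_nat rat) -natr1.
have dS : d.+1%:R = d%:R + 1 :> rat by rewrite -natr1.
have d1_gt0 : 0 < d.+1%:R :> rat by rewrite ltr0n.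
have mu_ge0 : 0 <= mu.
  by rewrite -(pmulr_rge0 _ d1_gt0); apply: le_trans (ler0n _ h) h_mu.
have mu_ge : N%:R - 2 <= mu.
  rewrite -(ler_pM2l d1_gt0); apply: le_trans _ h_mu; rewrite dS in h_N *; lra.
have [N_le1|N_gt1] := leqP N 1.
  have c0 : c = 0%N by lia.
  by rewrite c0 mul0r addr0 in k_le; lra.
have N_gt0 : 0 < N%:R :> rat by rewrite ltr0n; lia.
have r_lt1 : N%:R^-1 < 1 :> rat by rewrite invf_lt1 // ltr1n.
have c_le : c%:R * (1 - N%:R^-1) <= (N%:R - 1) * (1 - N%:R^-1) :> rat.
  by apply: ler_wpM2r; [rewrite subr_ge0 ltW | rewrite lerBrDr natr1 ler_nat].
have : (N%:R - 1) * (1 - N%:R^-1) = N%:R - 2 + N%:R^-1 :> rat.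
  by rewrite mulrBl mulrBr mulfV ?gt_eqF //; ring.
lra.
Qed.

Local Open Scope fset_scope.

Theorem theorem1p3 (d : nat) (A : {fset 'rV[int]_d})
  (v : 'I_d.+1 -> 'rV[int]_d)
  (hgen : diff_generates A) (hsimp : conv_is_simplex A v)
  (h : nat)
  (hh : simplex_vol v * ((d.+1)`!)%:R - 2 - 2 * d%:R <= (h%:R : rat)) :
  forall z : 'rV[int]_d,
    ksum h (fun a => a \in A) z <->
    (forall i : 'I_d.+1, translate (v i *+ h) (Tcone A (v i)) z).
Proof.
case: hsimp => hind [hvA hA] z; split=> [hz i|hz]; first exact: ksum_translate_cone.
have [i heavy] := exists_heavy_vertex hind z h.
have [s [sA hs]] := translate_cone_shifted_sum (hz i).
have [s' [s'A s'_vi s'_sum s'_count]] := short_representation hind hA hvA i sA.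
apply: (ksum_pad (hvA i) s'A _ (etrans hs (esym s'_sum))).
apply: (le_of_weight_bound s'_count heavy); first by rewrite -simplex_vol_index.
have := size_le_bary hind hA s'A s'_vi; rewrite s'_sum -hs; lra.
Qed.
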